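(* For every $n\ge 0$ the Jones–Wenzl projector $\mathrm{j}_n\in\mathrm{End}_{\mathcal{TL}_0(\Bbbk)}(\mathbf n)$ is idempotent: $\mathrm{j}_n\circ\mathrm{j}_n=\mathrm{j}_n$.
   Context: $\Bbbk$ is a field. $\mathcal{TL}_0(\Bbbk)$ is the strict $\Bbbk$-linear monoidal category with objects $\mathbf 0,\mathbf 1,\dots$, $\mathbf m\otimes\mathbf n=\mathbf{m+n}$, generated by $\mathrm{cup}:\mathbf 0\to\mathbf 2$ and $\mathrm{cap}:\mathbf 2\to\mathbf 0$ subject to $(\mathrm{id}_{\mathbf 1}\otimes\mathrm{cap})\circ(\mathrm{cup}\otimes\mathrm{id}_{\mathbf 1})=0=(\mathrm{cap}\otimes\mathrm{id}_{\mathbf 1})\circ(\mathrm{id}_{\mathbf 1}\otimes\mathrm{cup})$ and $\mathrm{cap}\circ\mathrm{cup}=\mathrm{id}_{\mathbf 0}$. A subset $I\subseteq\{1,\dots,n\}$ is apt if $n\notin I$ and $i\in I$ implies $i-1,i+1\notin I$. For apt $I$, $\mathrm{cap}_{I,n}:\mathbf n\to\mathbf{n-2|I|}$ is the diagram with a cap joining strands $i$ and $i+1$ for each $i\in I$ and through-strands elsewhere, and $\mathrm{cup}_{I,n}:\mathbf{n-2|I|}\to\mathbf n$ is its reflection (cups in the same positions). Define $\mathrm{j}_n=\sum_{I\subseteq\{1,\dots,n\}\text{ apt}}(-1)^{|I|}\,\mathrm{cup}_{I,n}\circ\mathrm{cap}_{I,n}$. *)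

(* The category TL_0(k) is encoded by its presentation:
   morphisms are formal k-linear combinations of (untyped) syntax terms built
   from identities, cup, cap, composition and tensor product, modulo the
   smallest k-linear congruence containing the strict monoidal category axioms
   and the three defining relations of TL_0(k). *)
From mathcomp Require Import all_boot all_order all_algebra.
Set Implicit Arguments. Unset Strict Implicit. Unset Printing Implicit Defensive.
Import GRing.Theory.
Local Open Scope ring_scope.

(* Syntax of morphisms.  TComp f g  means  f \o g  (g first). *)
Inductive tl_term : Type :=
| TId of nat
| TCup
| TCap
| TComp of tl_term & tl_term
| TTens of tl_term & tl_term.

Fixpoint ty (t : tl_term) : option (nat * nat) :=
  match t with
  | TId n => Some (n, n)
  | TCup => Some (0%N, 2%N)
  | TCap => Some (2%N, 0%N)
  | TComp f g =>
      match ty f, ty g with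
      | Some (b, c), Some (a, b') => if b == b' then Some (a, c) else None
      | _, _ => None
      end
  | TTens f g =>
      match ty f, ty g with
      | Some (a, b), Some (c, d) => Some ((a + c)%N, (b + d)%N)
      | _, _ => None
      end
  end.

Definition typed (t : tl_term) : Prop := exists mn, ty t = Some mn.

Inductive tl_ax : tl_term -> tl_term -> Prop :=
| ax_comp_assoc f g h : typed (TComp (TComp f g) h) ->
    tl_ax (TComp (TComp f g) h) (TComp f (TComp g h))
| ax_comp_idl f m n : ty f = Some (m, n) -> tl_ax (TComp (TId n) f) f
| ax_comp_idr f m n : ty f = Some (m, n) -> tl_ax (TComp f (TId m)) f
| ax_tens_assoc f g h : typed f -> typed g -> typed h ->
    tl_ax (TTens (TTens f g) h) (TTens f (TTens g h))
| ax_tens_unitl f : typed f -> tl_ax (TTens (TId 0) f) f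
| ax_tens_unitr f : typed f -> tl_ax (TTens f (TId 0)) f
| ax_tens_id m n : tl_ax (TTens (TId m) (TId n)) (TId (m + n))
| ax_interchange f g f' g' : typed (TComp f f') -> typed (TComp g g') ->
    tl_ax (TComp (TTens f g) (TTens f' g')) (TTens (TComp f f') (TComp g g'))
| ax_circle : tl_ax (TComp TCap TCup) (TId 0).

(* The zigzag relations of TL_0: these morphisms are 0. *)
Inductive tl_ax0 : tl_term -> Prop :=
| ax_zigzag1 : tl_ax0 (TComp (TTens (TId 1) TCap) (TTens TCup (TId 1)))
| ax_zigzag2 : tl_ax0 (TComp (TTens TCap (TId 1)) (TTens (TId 1) TCup)).

Section Lin.
Variable k : fieldType.

Definition lincomb := seq (k * tl_term).

Definition scale_lc (c : k) (l : lincomb) : lincomb :=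
  [seq (c * p.1, p.2) | p <- l].
Definition comp_lc (l1 l2 : lincomb) : lincomb :=
  [seq (p.1 * q.1, TComp p.2 q.2) | p <- l1, q <- l2].
Definition tens_lc (l1 l2 : lincomb) : lincomb :=
  [seq (p.1 * q.1, TTens p.2 q.2) | p <- l1, q <- l2].

Inductive tl_eq : lincomb -> lincomb -> Prop :=
| tl_refl l : tl_eq l l
| tl_sym l l' : tl_eq l l' -> tl_eq l' l
| tl_trans l1 l2 l3 : tl_eq l1 l2 -> tl_eq l2 l3 -> tl_eq l1 l3
| tl_cat l1 l1' l2 l2' : tl_eq l1 l1' -> tl_eq l2 l2' ->
    tl_eq (l1 ++ l2) (l1' ++ l2')
| tl_swap x y : tl_eq [:: x; y] [:: y; x]
| tl_merge a b t : tl_eq [:: (a, t); (b, t)] [:: (a + b, t)]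
| tl_zero t : tl_eq [:: (0, t)] [::]
| tl_scale c l l' : tl_eq l l' -> tl_eq (scale_lc c l) (scale_lc c l')
| tl_compl t l l' : tl_eq l l' ->
    tl_eq (comp_lc [:: (1, t)] l) (comp_lc [:: (1, t)] l')
| tl_compr t l l' : tl_eq l l' ->
    tl_eq (comp_lc l [:: (1, t)]) (comp_lc l' [:: (1, t)])
| tl_tensl t l l' : tl_eq l l' ->
    tl_eq (tens_lc [:: (1, t)] l) (tens_lc [:: (1, t)] l')
| tl_tensr t l l' : tl_eq l l' ->
    tl_eq (tens_lc l [:: (1, t)]) (tens_lc l' [:: (1, t)])
| tl_ax_eq s t : tl_ax s t -> tl_eq [:: (1, s)] [:: (1, t)]
| tl_ax0_eq s : tl_ax0 s -> tl_eq [:: (1, s)] [::].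

End Lin.

(* Strands are numbered 0..n-1 here (strand i+1 of the paper). *)
Definition apt (n : nat) (I : {set 'I_n}) : bool :=
  [forall i : 'I_n, (i \in I) ==>
     ((i.+1 < n)%N && [forall j in I, val j != i.+1])].

(* strands i, i+1, ..., i+m-1 ; P j : a cap (resp. cup) starts at strand j *)
Fixpoint capT_aux (P : nat -> bool) (i m : nat) : tl_term :=
  match m with
  | 0 => TId 0
  | 1 => TId 1
  | S ((S m') as m1) =>
      if P i then TTens TCap (capT_aux P i.+2 m')
      else TTens (TId 1) (capT_aux P i.+1 m1)
  end.

Fixpoint cupT_aux (P : nat -> bool) (i m : nat) : tl_term :=
  match m with
  | 0 => TId 0
  | 1 => TId 1
  | S ((S m') as m1) =>
      if P i then TTens TCup (cupT_aux P i.+2 m')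
      else TTens (TId 1) (cupT_aux P i.+1 m1)
  end.

Definition inI (n : nat) (I : {set 'I_n}) (j : nat) : bool :=
  [exists i in I, val i == j].

(* cap_{I,n} : n -> n - 2|I|   and   cup_{I,n} : n - 2|I| -> n *)
Definition cap_I (n : nat) (I : {set 'I_n}) : tl_term := capT_aux (inI I) 0 n.
Definition cup_I (n : nat) (I : {set 'I_n}) : tl_term := cupT_aux (inI I) 0 n.

Definition jw (k : fieldType) (n : nat) : lincomb k :=
  [seq ((-1) ^+ #|J|, TComp (cup_I J) (cap_I J)) |
     J : {set 'I_n} <- enum [pred J : {set 'I_n} | apt J]].

(* Sorting the apt sets by whether the first strand carries a cap gives the
   recursion j_(n+2) = id_1 ⊗ j_(n+1) - e ⊗ j_n with e = cup ∘ cap, where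
   j_0 and j_1 are identities.  In TL_0 we have e ∘ e = e (since
   cap ∘ cup = id_0), while (id_1 ⊗ e) ∘ (e ⊗ id_1) and (e ⊗ id_1) ∘ (id_1 ⊗ e)
   contain a zigzag and vanish.  Inductively, id_1 ⊗ j_(n+1) therefore absorbs
   e ⊗ j_n on both sides, and expanding j_(n+2) ∘ j_(n+2) leaves
   id_1 ⊗ j_(n+1) - 2 e ⊗ j_n + e ⊗ j_n = j_(n+2). *)

From HB Require Import structures.
From mathcomp Require Import all_boot all_order all_algebra.
From Stdlib Require Import Setoid Morphisms.
Import GRing.Theory.
Local Open Scope ring_scope.

Fixpoint tl_term_eqb (s t : tl_term) : bool :=
  match s, t with
  | TId m, TId n => m == n
  | TCup, TCup | TCap, TCap => true
  | TComp a b, TComp c d | TTens a b, TTens c d => tl_term_eqb a c && tl_term_eqb b d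
  | _, _ => false
  end.

Lemma tl_term_eqP : Equality.axiom tl_term_eqb.
Proof.
elim=> [m|||a IHa b IHb|a IHa b IHb] [n|||c d|c d] /=; try by constructor.
- by apply: (iffP eqP) => [->|[]].
- by case: (IHa c) => [->|?]; case: (IHb d) => [->|?]; constructor; congruence.
- by case: (IHa c) => [->|?]; case: (IHb d) => [->|?]; constructor; congruence.
Qed.

HB.instance Definition _ := hasDecEq.Build tl_term tl_term_eqP.

Lemma nat_ind2 (Q : nat -> Prop) :
  Q 0%N -> Q 1%N -> (forall m, Q m -> Q m.+1 -> Q m.+2) -> forall m, Q m.
Proof.
move=> Q0 Q1 QS m; suff [] : Q m /\ Q m.+1 by [].
by elim: m => [|m [Qm Qm1]]; split => //; apply: QS.
Qed.

Lemma capT_auxSS P i m : capT_aux P i m.+2 =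
  if P i then TTens TCap (capT_aux P i.+2 m) else TTens (TId 1) (capT_aux P i.+1 m.+1).
Proof. by []. Qed.

Lemma cupT_auxSS P i m : cupT_aux P i m.+2 =
  if P i then TTens TCup (cupT_aux P i.+2 m) else TTens (TId 1) (cupT_aux P i.+1 m.+1).
Proof. by []. Qed.

Arguments capT_aux : simpl never.
Arguments cupT_aux : simpl never.

Lemma ty_capT_cupT_aux P m i :
  exists r, ty (capT_aux P i m) = Some (m, r) /\ ty (cupT_aux P i m) = Some (r, m).
Proof.
elim/nat_ind2: m i => [i|i|m IH IH1 i]; [by exists 0%N | by exists 1%N |].
rewrite capT_auxSS cupT_auxSS; case: (P i) => /=.
  by have [r [-> ->]] := IH i.+2; exists r.
by have [r [-> ->]] := IH1 i.+1; exists r.+1.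
Qed.

Lemma capT_aux_shift P Q m i j :
  (forall x, P (i + x)%N = Q (j + x)%N) -> capT_aux P i m = capT_aux Q j m.
Proof.
elim/nat_ind2: m i j => [//|//|m IH IH1 i j] PQ.
have PQ0 : P i = Q j by have := PQ 0%N; rewrite !addn0.
have PQ1 x : P (i.+1 + x)%N = Q (j.+1 + x)%N by rewrite !addSn -!addnS.
have PQ2 x : P (i.+2 + x)%N = Q (j.+2 + x)%N by rewrite !addSn -!addnS.
by rewrite !capT_auxSS PQ0 (IH _ _ PQ2) (IH1 _ _ PQ1).
Qed.

Lemma cupT_aux_shift P Q m i j :
  (forall x, P (i + x)%N = Q (j + x)%N) -> cupT_aux P i m = cupT_aux Q j m.
Proof.
elim/nat_ind2: m i j => [//|//|m IH IH1 i j] PQ.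
have PQ0 : P i = Q j by have := PQ 0%N; rewrite !addn0.
have PQ1 x : P (i.+1 + x)%N = Q (j.+1 + x)%N by rewrite !addSn -!addnS.
have PQ2 x : P (i.+2 + x)%N = Q (j.+2 + x)%N by rewrite !addSn -!addnS.
by rewrite !cupT_auxSS PQ0 (IH _ _ PQ2) (IH1 _ _ PQ1).
Qed.

(* The apt subsets of 'I_n as boolean sequences, listed according to the
   recursion: strand 0 either is free or starts a cap (and strand 1 is free). *)
Fixpoint apt_seqs (n : nat) : seq (seq bool) :=
  match n with
  | 0 => [:: [::]]
  | 1 => [:: [:: false]]
  | S ((S m) as m1) =>
      map (cons false) (apt_seqs m1) ++ map (fun s => [:: true, false & s]) (apt_seqs m)
  end.

Definition apt_seq (s : seq bool) : bool :=
  all (fun i => nth false s i ==> (i.+1 < size s)%N && ~~ nth false s i.+1)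
      (iota 0 (size s)).

Lemma apt_seq_cons b s :
  apt_seq (b :: s) = (b ==> (0 < size s)%N && ~~ nth false s 0) && apt_seq s.
Proof. by rewrite /apt_seq /= -[1%N]addn0 iotaDl all_map. Qed.

Lemma apt_seqsSS m : apt_seqs m.+2 =
  map (cons false) (apt_seqs m.+1) ++ map (fun s => [:: true, false & s]) (apt_seqs m).
Proof. by []. Qed.

Arguments apt_seqs : simpl never.

Lemma mem_apt_seqs n s : (s \in apt_seqs n) = (size s == n) && apt_seq s.
Proof.
elim/nat_ind2: n s => [[]|[|[] []]|m IH IH1 s] //.
have false_cons t : (false :: t \in map (fun s => [:: true, false & s]) (apt_seqs m)) = false.
  by apply/mapP => -[].
have true_cons t : (true :: t \in map (cons false) (apt_seqs m.+1)) = false.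
  by apply/mapP => -[].
rewrite apt_seqsSS mem_cat; case: s => [|[] s]; rewrite ?apt_seq_cons /=.
- by apply/negbTE; rewrite negb_or; apply/andP; split; apply/mapP => -[].
- rewrite true_cons; case: s => [|[] s] /=.
  + by apply/mapP => -[].
  + by rewrite andbF; apply/mapP => -[].
  + rewrite (@mem_map _ _ (fun s => [:: true, false & s])) ?IH ?apt_seq_cons ?andbT //.
    by move=> ? ? [].
- by rewrite false_cons orbF mem_map ?IH1 // => ? ? [].
Qed.

Lemma uniq_apt_seqs n : uniq (apt_seqs n).
Proof.
elim/nat_ind2: n => // m IH IH1.
rewrite apt_seqsSS cat_uniq !map_inj_uniq ?IH ?IH1 ?andbT /=; try by move=> ? ? [].
by apply/hasPn => _ /mapP [s _ ->]; apply/mapP => -[].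
Qed.

Definition seq_of_set {n} (J : {set 'I_n}) : seq bool := [seq i \in J | i <- enum 'I_n].

Lemma size_seq_of_set {n} (J : {set 'I_n}) : size (seq_of_set J) = n.
Proof. by rewrite size_map size_enum_ord. Qed.

Lemma inI_val {n} (J : {set 'I_n}) (i : 'I_n) : inI J i = (i \in J).
Proof.
apply/existsP/idP => [[j /andP [jJ /eqP /val_inj <-]] //|iJ].
by exists i; rewrite iJ eqxx.
Qed.

Lemma nth_seq_of_set {n} (J : {set 'I_n}) j : nth false (seq_of_set J) j = inI J j.
Proof.
case: (ltnP j n) => [lt_jn|le_nj].
  rewrite (nth_map (Ordinal lt_jn)) ?size_enum_ord // (inI_val J (Ordinal lt_jn)).
  by congr (_ \in J); apply: val_inj; rewrite /= nth_enum_ord.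
rewrite nth_default ?size_seq_of_set //; apply/esym/existsP => -[i /andP [_ /eqP ij]].
by move: (ltn_ord i); rewrite ij ltnNge le_nj.
Qed.

Lemma card_seq_of_set {n} (J : {set 'I_n}) : #|J| = count id (seq_of_set J).
Proof.
rewrite count_map cardE /enum_mem size_filter count_filter.
by apply: eq_count => i; rewrite /= andbT.
Qed.

Lemma seq_of_set_inj n : injective (@seq_of_set n).
Proof.
move=> J1 J2 eqJ; apply/setP => i.
by rewrite -!inI_val -!nth_seq_of_set eqJ.
Qed.

Lemma apt_seq_of_set {n} (J : {set 'I_n}) : apt J = apt_seq (seq_of_set J).
Proof.
rewrite /apt_seq size_seq_of_set.
apply/forallP/allP => [aptJ j|aptJ i].
  rewrite mem_iota add0n => lt_jn.
  have := aptJ (Ordinal lt_jn); rewrite !nth_seq_of_set (inI_val J (Ordinal lt_jn)).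
  case: (_ \in J) => //= /andP [lt_j1n /forallP nJ].
  rewrite lt_j1n (inI_val J (Ordinal lt_j1n)).
  by apply/negP => j1J; have := nJ (Ordinal lt_j1n); rewrite j1J eqxx.
have := aptJ i; rewrite mem_iota ltn_ord !nth_seq_of_set inI_val => /(_ isT).
case: (i \in J) => //= /andP [lt_i1n nJ]; rewrite lt_i1n.
apply/forallP => j; apply/implyP => jJ; apply: contra nJ => /eqP ji.
by rewrite -ji inI_val.
Qed.

Lemma perm_apt_seqs n :
  perm_eq (map (@seq_of_set n) (enum [pred J : {set 'I_n} | apt J])) (apt_seqs n).
Proof.
apply: uniq_perm; rewrite ?uniq_apt_seqs ?(map_inj_uniq (@seq_of_set_inj n)) ?enum_uniq //.
move=> s; rewrite mem_apt_seqs; apply/mapP/andP => [[J]|[/eqP size_s apt_s]].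
  by rewrite mem_enum inE apt_seq_of_set => aptJ ->; rewrite size_seq_of_set.
have s_of_set : seq_of_set [set i : 'I_n | nth false s i] = s.
  apply: (@eq_from_nth _ false); rewrite size_seq_of_set ?size_s // => i lt_in.
  by rewrite nth_seq_of_set (inI_val _ (Ordinal lt_in)) inE.
by exists [set i : 'I_n | nth false s i]; rewrite // mem_enum inE apt_seq_of_set s_of_set.
Qed.

Lemma cap_I_seq {n} (J : {set 'I_n}) : cap_I J = capT_aux (nth false (seq_of_set J)) 0 n.
Proof. by apply: capT_aux_shift => x; rewrite nth_seq_of_set. Qed.

Lemma cup_I_seq {n} (J : {set 'I_n}) : cup_I J = cupT_aux (nth false (seq_of_set J)) 0 n.
Proof. by apply: cupT_aux_shift => x; rewrite nth_seq_of_set. Qed.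

Ltac solve_typed := rewrite /typed /=;
  repeat match goal with H : ty ?x = _ |- context [ty ?x] => rewrite H /= end;
  rewrite ?eqxx /=; eexists; reflexivity.

Section Presentation.
Variable k : fieldType.
Local Notation lc := (lincomb k).
Local Notation "a =~ b" := (@tl_eq k a b) (at level 70).
Local Notation "t ⊗ l" := (tens_lc [:: (1 : k, t)] l) (at level 40).

#[export] Instance tl_eq_Equivalence : Equivalence (@tl_eq k).
Proof. by split; [exact: tl_refl | exact: tl_sym | exact: tl_trans]. Qed.

#[export] Instance cat_Proper : Proper (@tl_eq k ==> @tl_eq k ==> @tl_eq k) cat.
Proof. by move=> ? ? ? ? ? ?; apply: tl_cat. Qed.

#[export] Instance scale_lc_Proper c : Proper (@tl_eq k ==> @tl_eq k) (scale_lc c).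
Proof. by move=> ? ? ?; apply: tl_scale. Qed.

#[export] Instance cons_Proper x : Proper (@tl_eq k ==> @tl_eq k) (cons x).
Proof. by move=> l l' ll'; apply: (tl_cat (tl_refl [:: x]) ll'). Qed.

Lemma tl_eq_cat_cons (l1 l2 : lc) x : l1 ++ x :: l2 =~ x :: l1 ++ l2.
Proof.
elim: l1 => [|y l1 IH] /=; first reflexivity.
rewrite IH -[y :: x :: _]/([:: y; x] ++ _) tl_swap; reflexivity.
Qed.

Lemma perm_tl_eq {l l' : lc} : perm_eq l l' -> l =~ l'.
Proof.
elim: l l' => [|x l IH] l'; first by rewrite perm_sym => /perm_nilP ->; reflexivity.
move=> pl; have xl' : x \in l' by rewrite -(perm_mem pl) mem_head.
move: pl; case/splitPr: xl' => l1 l2 pl.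
have /IH ll12 : perm_eq l (l1 ++ l2).
  by rewrite -(perm_cons x) (permPl pl) -cat1s perm_catCA.
by rewrite ll12 tl_eq_cat_cons; reflexivity.
Qed.

Lemma cat_scale_lcN1 (l : lc) : l ++ scale_lc (-1) l =~ [::].
Proof.
elim: l => [|[c t] l IH] /=; first reflexivity.
rewrite tl_eq_cat_cons -[_ :: _ :: _]/([:: (c, t); (-1 * c, t)] ++ _) IH tl_merge.
by rewrite mulN1r subrr tl_zero; reflexivity.
Qed.

Lemma scale_lcNN (l : lc) : scale_lc (-1) (scale_lc (-1) l) = l.
Proof.
by rewrite /scale_lc -map_comp map_id_in // => -[c t] _ /=; rewrite mulrA mulrNN !mul1r.
Qed.

Definition lc_map2 (op : tl_term -> tl_term -> tl_term) (l1 l2 : lc) : lc :=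
  [seq (p.1 * q.1, op p.2 q.2) | p <- l1, q <- l2].

Lemma lc_map2_catl op (l1 l2 m : lc) :
  lc_map2 op (l1 ++ l2) m = lc_map2 op l1 m ++ lc_map2 op l2 m.
Proof. exact: allpairs_cat. Qed.

Lemma lc_map2_catr op (l m1 m2 : lc) :
  lc_map2 op l (m1 ++ m2) =~ lc_map2 op l m1 ++ lc_map2 op l m2.
Proof. by apply/perm_tl_eq/permPl/perm_allpairs_catr. Qed.

Lemma lc_map2_scalel op c (l m : lc) :
  lc_map2 op (scale_lc c l) m = scale_lc c (lc_map2 op l m).
Proof.
rewrite /lc_map2 /scale_lc allpairs_mapl map_allpairs.
by apply: eq_allpairs => p q /=; rewrite mulrA.
Qed.

Lemma lc_map2_scaler op c (l m : lc) :
  lc_map2 op l (scale_lc c m) = scale_lc c (lc_map2 op l m).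
Proof.
rewrite /lc_map2 /scale_lc allpairs_mapr map_allpairs.
by apply: eq_allpairs => p q /=; rewrite mulrCA.
Qed.

Lemma lc_map2_Proper op :
  (forall t l l', l =~ l' -> lc_map2 op [:: (1, t)] l =~ lc_map2 op [:: (1, t)] l') ->
  (forall t l l', l =~ l' -> lc_map2 op l [:: (1, t)] =~ lc_map2 op l' [:: (1, t)]) ->
  Proper (@tl_eq k ==> @tl_eq k ==> @tl_eq k) (lc_map2 op).
Proof.
move=> congrl congrr l l' ll' m m' mm'.
have scale_lc1 c t : [:: (c, t)] = scale_lc c [:: (1, t)] by rewrite /scale_lc /= mulr1.
transitivity (lc_map2 op l m').
  elim: l {ll'} => [|[c t] l IH]; first reflexivity.
  by rewrite -cat1s !lc_map2_catl scale_lc1 !lc_map2_scalel (congrl _ _ _ mm') IH; reflexivity.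
elim: m' {mm'} => [|[c t] m' IH]; first by rewrite /lc_map2 !allpairs0r; reflexivity.
by rewrite -cat1s !lc_map2_catr scale_lc1 !lc_map2_scaler (congrr _ _ _ ll') IH; reflexivity.
Qed.

#[export] Instance comp_lc_Proper : Proper (@tl_eq k ==> @tl_eq k ==> @tl_eq k) (@comp_lc k).
Proof. exact: (lc_map2_Proper TComp (@tl_compl k) (@tl_compr k)). Qed.

#[export] Instance tens_lc_Proper : Proper (@tl_eq k ==> @tl_eq k ==> @tl_eq k) (@tens_lc k).
Proof. exact: (lc_map2_Proper TTens (@tl_tensl k) (@tl_tensr k)). Qed.

Definition teq (s t : tl_term) : Prop := [:: (1 : k, s)] =~ [:: (1, t)].
Definition tzero (t : tl_term) : Prop := [:: (1 : k, t)] =~ [::].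

#[export] Instance teq_Equivalence : Equivalence teq.
Proof. by split=> [s|s t|s t u]; [exact: tl_refl | exact: tl_sym | exact: tl_trans]. Qed.

Lemma teq_tl_eq c {s t} : teq s t -> [:: (c, s)] =~ [:: (c, t)].
Proof. by move=> /(tl_scale c); rewrite /scale_lc /= mulr1. Qed.

Lemma tzero_tl_eq c {t} : tzero t -> [:: (c, t)] =~ [::].
Proof. by move=> /(tl_scale c); rewrite /scale_lc /= mulr1. Qed.

#[export] Instance TComp_Proper : Proper (teq ==> teq ==> teq) TComp.
Proof.
move=> s s' ss' t t' tt'; rewrite /teq; transitivity [:: (1 : k, TComp s t')].
  by have := tl_compl s tt'; rewrite /comp_lc /= mulr1.
by have := tl_compr t' ss'; rewrite /comp_lc /= mulr1.
Qed.

#[export] Instance TTens_Proper : Proper (teq ==> teq ==> teq) TTens.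
Proof.
move=> s s' ss' t t' tt'; rewrite /teq; transitivity [:: (1 : k, TTens s t')].
  by have := tl_tensl s tt'; rewrite /tens_lc /= mulr1.
by have := tl_tensr t' ss'; rewrite /tens_lc /= mulr1.
Qed.

#[export] Instance tzero_Proper : Proper (teq ==> iff) tzero.
Proof. by move=> s t st; split=> [/(tl_trans (tl_sym st)) | /(tl_trans st)]. Qed.

Lemma tzero_compl u t : tzero t -> tzero (TComp u t).
Proof. by move=> /(tl_compl u); rewrite /comp_lc /= mulr1. Qed.

Lemma tzero_compr u t : tzero t -> tzero (TComp t u).
Proof. by move=> /(tl_compr u); rewrite /comp_lc /= mulr1. Qed.

Lemma tzero_tensr u t : tzero t -> tzero (TTens t u).
Proof. by move=> /(tl_tensr u); rewrite /tens_lc /= mulr1. Qed.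

Lemma eq_map_tl (T : eqType) (s : seq T) (f g : T -> k * tl_term) :
  {in s, forall x, (f x).1 = (g x).1 /\ teq (f x).2 (g x).2} -> map f s =~ map g s.
Proof.
elim: s => [|x s IH] fg /=; first reflexivity.
rewrite IH => [|y ys]; last by apply: fg; rewrite inE ys orbT.
have [] := fg x (mem_head _ _); case: (f x) (g x) => [c t] [c' t'] /= <- tt'.
by rewrite -cat1s (teq_tl_eq c tt'); reflexivity.
Qed.

Lemma map_tl_zero (T : eqType) (s : seq T) (f : T -> k * tl_term) :
  {in s, forall x, tzero (f x).2} -> map f s =~ [::].
Proof.
elim: s => [|x s IH] f0 /=; first reflexivity.
rewrite IH => [|y ys]; last by apply: f0; rewrite inE ys orbT.
have := f0 x (mem_head _ _); case: (f x) => [c t] /= /(tzero_tl_eq c) t0.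
by rewrite -cat1s t0; reflexivity.
Qed.

Lemma teq_compA f g h : typed (TComp (TComp f g) h) ->
  teq (TComp (TComp f g) h) (TComp f (TComp g h)).
Proof. by move=> fgh; apply/tl_ax_eq/ax_comp_assoc. Qed.

Lemma teq_comp1l n f : typed (TComp (TId n) f) -> teq (TComp (TId n) f) f.
Proof.
case=> mn /=; case tyf: (ty f) => [[a b]|] //.
by case: eqP => // -> _; apply/tl_ax_eq/ax_comp_idl/tyf.
Qed.

Lemma teq_comp1r n f : typed (TComp f (TId n)) -> teq (TComp f (TId n)) f.
Proof.
case=> mn /=; case tyf: (ty f) => [[a b]|] //.
by case: eqP => // <- _; apply/tl_ax_eq/ax_comp_idr/tyf.
Qed.

Lemma teq_tensA f g h : typed (TTens (TTens f g) h) ->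
  teq (TTens (TTens f g) h) (TTens f (TTens g h)).
Proof.
case=> mn /=; case tyf: (ty f) => [[a b]|] //; case tyg: (ty g) => [[c d]|] //.
by case tyh: (ty h) => [[e e']|] // _; apply/tl_ax_eq/ax_tens_assoc; eexists; eassumption.
Qed.

Lemma teq_tens_id m n : teq (TTens (TId m) (TId n)) (TId (m + n)).
Proof. exact/tl_ax_eq/ax_tens_id. Qed.

Lemma teq_interchange f g f' g' : typed (TComp f f') -> typed (TComp g g') ->
  teq (TComp (TTens f g) (TTens f' g')) (TTens (TComp f f') (TComp g g')).
Proof. by move=> ff' gg'; apply/tl_ax_eq/ax_interchange. Qed.

Lemma teq_cap_cup : teq (TComp TCap TCup) (TId 0).
Proof. exact/tl_ax_eq/ax_circle. Qed.

Lemma tzero_zigzag1 : tzero (TComp (TTens (TId 1) TCap) (TTens TCup (TId 1))).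
Proof. exact/tl_ax0_eq/ax_zigzag1. Qed.

Lemma tzero_zigzag2 : tzero (TComp (TTens TCap (TId 1)) (TTens (TId 1) TCup)).
Proof. exact/tl_ax0_eq/ax_zigzag2. Qed.

Definition cupcap : tl_term := TComp TCup TCap.

Lemma cupcap_idem : teq (TComp cupcap cupcap) cupcap.
Proof.
rewrite /cupcap (teq_compA TCup TCap); last solve_typed.
rewrite -(teq_compA TCap TCup TCap); last solve_typed.
by rewrite teq_cap_cup (teq_comp1l 0 TCap); [reflexivity | solve_typed].
Qed.

Lemma teq_tens_id_comp n x y : typed (TComp x y) ->
  teq (TTens (TId n) (TComp x y)) (TComp (TTens (TId n) x) (TTens (TId n) y)).
Proof.
move=> xy; rewrite (teq_interchange (TId n) x (TId n) y) //; last solve_typed.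
by rewrite (teq_comp1l n (TId n)); [reflexivity | solve_typed].
Qed.

Lemma teq_tens_comp_id n x y : typed (TComp x y) ->
  teq (TTens (TComp x y) (TId n)) (TComp (TTens x (TId n)) (TTens y (TId n))).
Proof.
move=> xy; rewrite (teq_interchange x (TId n) y (TId n)) //; last solve_typed.
by rewrite (teq_comp1l n (TId n)); [reflexivity | solve_typed].
Qed.

Lemma tzero_shift_cupcap_cupcap :
  tzero (TComp (TTens (TId 1) cupcap) (TTens cupcap (TId 1))).
Proof.
rewrite /cupcap (teq_tens_id_comp 1 TCup TCap); try solve_typed.
rewrite (teq_tens_comp_id 1 TCup TCap); try solve_typed.
rewrite (teq_compA (TTens (TId 1) TCup) (TTens (TId 1) TCap)); try solve_typed.
rewrite -(teq_compA (TTens (TId 1) TCap) (TTens TCup (TId 1))); try solve_typed.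
exact/tzero_compl/tzero_compr/tzero_zigzag1.
Qed.

Lemma tzero_cupcap_shift_cupcap :
  tzero (TComp (TTens cupcap (TId 1)) (TTens (TId 1) cupcap)).
Proof.
rewrite /cupcap (teq_tens_id_comp 1 TCup TCap); try solve_typed.
rewrite (teq_tens_comp_id 1 TCup TCap); try solve_typed.
rewrite (teq_compA (TTens TCup (TId 1)) (TTens TCap (TId 1))); try solve_typed.
rewrite -(teq_compA (TTens TCap (TId 1)) (TTens (TId 1) TCup)); try solve_typed.
exact/tzero_compl/tzero_compr/tzero_zigzag2.
Qed.

Lemma tzero_shift_cupcap_cupcap_tens m c b :
  ty c = Some (m, m) -> ty b = Some (m.+1, m.+1) ->
  tzero (TComp (TTens (TId 1) (TTens cupcap c)) (TTens cupcap b)).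
Proof.
move=> tyc tyb.
have split_b : teq (TTens cupcap b) (TComp (TTens cupcap (TId m.+1)) (TTens (TId 2) b)).
  rewrite (teq_interchange cupcap (TId m.+1) (TId 2) b); try solve_typed.
  rewrite (teq_comp1r 2 cupcap); try solve_typed.
  by rewrite (teq_comp1l m.+1 b); [reflexivity | solve_typed].
rewrite split_b -(teq_compA _ (TTens cupcap (TId m.+1)) (TTens (TId 2) b)); try solve_typed.
apply: tzero_compr; rewrite -(teq_tensA (TId 1) cupcap c); try solve_typed.
rewrite -[TId m.+1]/(TId (1 + m)) -(teq_tens_id 1 m).
rewrite -(teq_tensA cupcap (TId 1) (TId m)); try solve_typed.
rewrite (teq_interchange (TTens (TId 1) cupcap) c (TTens cupcap (TId 1)) (TId m));
  try solve_typed.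
exact/tzero_tensr/tzero_shift_cupcap_cupcap.
Qed.

Lemma tzero_cupcap_shift_cupcap_tens m c b :
  ty c = Some (m, m) -> ty b = Some (m.+1, m.+1) ->
  tzero (TComp (TTens cupcap b) (TTens (TId 1) (TTens cupcap c))).
Proof.
move=> tyc tyb.
have split_b : teq (TTens cupcap b) (TComp (TTens (TId 2) b) (TTens cupcap (TId m.+1))).
  rewrite (teq_interchange (TId 2) b cupcap (TId m.+1)); try solve_typed.
  rewrite (teq_comp1l 2 cupcap); try solve_typed.
  by rewrite (teq_comp1r m.+1 b); [reflexivity | solve_typed].
rewrite split_b (teq_compA (TTens (TId 2) b) (TTens cupcap (TId m.+1))); try solve_typed.
apply: tzero_compl; rewrite -(teq_tensA (TId 1) cupcap c); try solve_typed.
rewrite -[TId m.+1]/(TId (1 + m)) -(teq_tens_id 1 m).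
rewrite -(teq_tensA cupcap (TId 1) (TId m)); try solve_typed.
rewrite (teq_interchange (TTens cupcap (TId 1)) (TId m) (TTens (TId 1) cupcap) c);
  try solve_typed.
exact/tzero_tensr/tzero_cupcap_shift_cupcap.
Qed.

Definition lc_ty (l : lc) (a b : nat) : bool := all (fun p => ty p.2 == Some (a, b)) l.

Lemma lc_tyP {l a b p} : lc_ty l a b -> p \in l -> ty p.2 = Some (a, b).
Proof. by move=> /allP l_ty /l_ty /eqP. Qed.

Lemma lc_ty_tens x l a b c d :
  ty x = Some (a, b) -> lc_ty l c d -> lc_ty (x ⊗ l) (a + c) (b + d).
Proof.
move=> tyx l_ty; rewrite /lc_ty /tens_lc allpairs1l all_map.
by apply/allP => p pl /=; rewrite tyx (lc_tyP l_ty pl).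
Qed.

Lemma eq_allpairs_tl (S T : eqType) (s : seq S) (t : seq T) (f g : S -> T -> k * tl_term) :
  (forall x y, x \in s -> y \in t -> (f x y).1 = (g x y).1 /\ teq (f x y).2 (g x y).2) ->
  [seq f x y | x <- s, y <- t] =~ [seq g x y | x <- s, y <- t].
Proof.
elim: s => [|x s IH] fg /=; first reflexivity.
rewrite (@eq_map_tl _ _ _ (g x)) => [|y yt]; last exact/fg/yt/mem_head.
by rewrite IH => [|x' y x's yt]; [reflexivity | apply: fg; rewrite ?inE ?x's ?orbT].
Qed.

Lemma allpairs_tl_zero (S T : eqType) (s : seq S) (t : seq T) (f : S -> T -> k * tl_term) :
  (forall x y, x \in s -> y \in t -> tzero (f x y).2) -> [seq f x y | x <- s, y <- t] =~ [::].
Proof.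
elim: s => [|x s IH] f0 /=; first reflexivity.
rewrite map_tl_zero => [|y yt]; last exact/f0/yt/mem_head.
by apply: IH => x' y x's yt; apply: f0; rewrite ?inE ?x's ?orbT.
Qed.

Lemma comp_lc_catl (l1 l2 m : lc) : comp_lc (l1 ++ l2) m = comp_lc l1 m ++ comp_lc l2 m.
Proof. exact: lc_map2_catl. Qed.

Lemma comp_lc_catr (l m1 m2 : lc) : comp_lc l (m1 ++ m2) =~ comp_lc l m1 ++ comp_lc l m2.
Proof. exact: lc_map2_catr. Qed.

Lemma comp_lc_scalel c (l m : lc) : comp_lc (scale_lc c l) m = scale_lc c (comp_lc l m).
Proof. exact: lc_map2_scalel. Qed.

Lemma comp_lc_scaler c (l m : lc) : comp_lc l (scale_lc c m) = scale_lc c (comp_lc l m).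
Proof. exact: lc_map2_scaler. Qed.

Lemma tens_lc_cat x (l1 l2 : lc) : x ⊗ (l1 ++ l2) = x ⊗ l1 ++ x ⊗ l2.
Proof. by rewrite /tens_lc !allpairs1l map_cat. Qed.

Lemma tens_lc_scale x c (l : lc) : x ⊗ scale_lc c l = scale_lc c (x ⊗ l).
Proof. exact: (lc_map2_scaler TTens c [:: (1, x)] l). Qed.

Lemma comp_lc_idl l m n : lc_ty l m n -> comp_lc [:: (1, TId n)] l =~ l.
Proof.
move=> l_ty; rewrite /comp_lc allpairs1l -[X in _ =~ X]map_id.
apply: eq_map_tl => p pl; rewrite /= mul1r; split=> //; have typ := lc_tyP l_ty pl.
by rewrite (teq_comp1l n p.2); [reflexivity | solve_typed].
Qed.

Lemma comp_lc_idr l m n : lc_ty l m n -> comp_lc l [:: (1, TId m)] =~ l.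
Proof.
move=> l_ty; rewrite /comp_lc allpairs1r -[X in _ =~ X]map_id.
apply: eq_map_tl => p pl; rewrite /= mulr1; split=> //; have typ := lc_tyP l_ty pl.
by rewrite (teq_comp1r m p.2); [reflexivity | solve_typed].
Qed.

Lemma tens_lc_tens x y l a b c d m n : ty x = Some (a, b) -> ty y = Some (c, d) ->
  lc_ty l m n -> x ⊗ (y ⊗ l) =~ TTens x y ⊗ l.
Proof.
move=> tyx tyy l_ty; rewrite /tens_lc !allpairs1l -map_comp.
apply: eq_map_tl => p pl; rewrite /= !mul1r; split=> //; have typ := lc_tyP l_ty pl.
by rewrite -(teq_tensA x y p.2); [reflexivity | solve_typed].
Qed.

Lemma tens_lc_comp x y l m a b c : typed (TComp x y) -> lc_ty l b c -> lc_ty m a b ->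
  comp_lc (x ⊗ l) (y ⊗ m) =~ TComp x y ⊗ comp_lc l m.
Proof.
move=> xy l_ty m_ty.
rewrite /comp_lc /tens_lc !allpairs1l allpairs_mapl allpairs_mapr map_allpairs.
apply: eq_allpairs_tl => p q pl qm; rewrite /= !mul1r; split=> //.
have typ := lc_tyP l_ty pl; have tyq := lc_tyP m_ty qm.
by rewrite (teq_interchange x p.2 y q.2) //; [reflexivity | solve_typed].
Qed.

Lemma tens_lc_teq x y l : teq x y -> x ⊗ l =~ y ⊗ l.
Proof. by rewrite /teq => ->; reflexivity. Qed.

Lemma comp_lc_shift_cupcap_cupcap c b m : lc_ty c m m -> lc_ty b m.+1 m.+1 ->
  comp_lc (TId 1 ⊗ (cupcap ⊗ c)) (cupcap ⊗ b) =~ [::].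
Proof.
move=> c_ty b_ty; rewrite /comp_lc /tens_lc !allpairs1l !allpairs_mapl !allpairs_mapr.
apply: allpairs_tl_zero => p q pc qb /=.
exact: tzero_shift_cupcap_cupcap_tens (lc_tyP c_ty pc) (lc_tyP b_ty qb).
Qed.

Lemma comp_lc_cupcap_shift_cupcap c b m : lc_ty c m m -> lc_ty b m.+1 m.+1 ->
  comp_lc (cupcap ⊗ b) (TId 1 ⊗ (cupcap ⊗ c)) =~ [::].
Proof.
move=> c_ty b_ty; rewrite /comp_lc /tens_lc !allpairs1l !allpairs_mapl !allpairs_mapr.
apply: allpairs_tl_zero => p q pb qc /=.
exact: tzero_cupcap_shift_cupcap_tens (lc_tyP c_ty qc) (lc_tyP b_ty pb).
Qed.

Section IdempotentOfRecursion.
Variable J : nat -> lc.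
Hypothesis J_ty : forall n, lc_ty (J n) n n.
Hypothesis J0 : J 0 =~ [:: (1, TId 0)].
Hypothesis J1 : J 1 =~ [:: (1, TId 1)].
Hypothesis JSS : forall n, J n.+2 =~ TId 1 ⊗ J n.+1 ++ scale_lc (-1) (cupcap ⊗ J n).

Lemma tens_id1_recursion n :
  TId 1 ⊗ J n.+2 =~ TId 2 ⊗ J n.+1 ++ scale_lc (-1) (TId 1 ⊗ (cupcap ⊗ J n)).
Proof.
rewrite JSS tens_lc_cat tens_lc_scale (tens_lc_tens (TId 1) (TId 1) _ 1 1 1 1 n.+1 n.+1) //.
by rewrite (tens_lc_teq _ _ _ (teq_tens_id 1 1)); reflexivity.
Qed.

Lemma tens_id1_J1 : TId 1 ⊗ J 1 =~ [:: (1, TId 2)].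
Proof. by rewrite J1 /tens_lc /= mulr1; exact: teq_tens_id. Qed.

Lemma lc_ty_cupcap_tens n : lc_ty (cupcap ⊗ J n) n.+2 n.+2.
Proof. exact: (lc_ty_tens cupcap (J n) 2 2 n n). Qed.

Lemma cupcap_absorb_l n : comp_lc (J n) (J n) =~ J n ->
  comp_lc (TId 1 ⊗ J n.+1) (cupcap ⊗ J n) =~ cupcap ⊗ J n.
Proof.
case: n => [_|n idem_n].
  by rewrite tens_id1_J1 (comp_lc_idl _ 2 2) ?lc_ty_cupcap_tens; reflexivity.
rewrite tens_id1_recursion comp_lc_catl comp_lc_scalel.
rewrite (comp_lc_shift_cupcap_cupcap _ _ n) //= cats0.
rewrite (tens_lc_comp _ _ _ _ n.+1 n.+1 n.+1) ?idem_n //; last solve_typed.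
by rewrite (tens_lc_teq _ _ _ (teq_comp1l 2 cupcap _)); [reflexivity | solve_typed].
Qed.

Lemma cupcap_absorb_r n : comp_lc (J n) (J n) =~ J n ->
  comp_lc (cupcap ⊗ J n) (TId 1 ⊗ J n.+1) =~ cupcap ⊗ J n.
Proof.
case: n => [_|n idem_n].
  by rewrite tens_id1_J1 (comp_lc_idr _ 2 2) ?lc_ty_cupcap_tens; reflexivity.
rewrite tens_id1_recursion comp_lc_catr comp_lc_scaler.
rewrite (comp_lc_cupcap_shift_cupcap _ _ n) //= cats0.
rewrite (tens_lc_comp _ _ _ _ n.+1 n.+1 n.+1) ?idem_n //; last solve_typed.
by rewrite (tens_lc_teq _ _ _ (teq_comp1r 2 cupcap _)); [reflexivity | solve_typed].
Qed.

Lemma idem_of_recursion n : comp_lc (J n) (J n) =~ J n.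
Proof.
suff [] : comp_lc (J n) (J n) =~ J n /\ comp_lc (J n.+1) (J n.+1) =~ J n.+1 by [].
elim: n => [|n [idem_n idem_n1]].
  by rewrite J0 J1 (comp_lc_idl _ 0 0) ?(comp_lc_idl _ 1 1) //; split; reflexivity.
split=> //; rewrite JSS.
set P := TId 1 ⊗ J n.+1; set Q := cupcap ⊗ J n.
have PP : comp_lc P P =~ P.
  rewrite (tens_lc_comp _ _ _ _ n.+1 n.+1 n.+1) ?idem_n1 //; last solve_typed.
  by rewrite (tens_lc_teq _ _ _ (teq_comp1l 1 (TId 1) _)); [reflexivity | solve_typed].
have QQ : comp_lc Q Q =~ Q.
  rewrite (tens_lc_comp _ _ _ _ n n n) ?idem_n //; last solve_typed.
  by rewrite (tens_lc_teq _ _ _ cupcap_idem); reflexivity.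
rewrite comp_lc_catl (comp_lc_catr P) (comp_lc_catr (scale_lc (-1) Q)).
rewrite !comp_lc_scalel !comp_lc_scaler scale_lcNN.
rewrite PP QQ cupcap_absorb_l // cupcap_absorb_r // -[X in _ =~ X]cats0.
apply: tl_cat; first reflexivity.
by rewrite (perm_tl_eq (permEl (perm_catC _ Q))) cat_scale_lcN1; reflexivity.
Qed.

End IdempotentOfRecursion.

Definition jw_term n (s : seq bool) : k * tl_term :=
  ((-1) ^+ count id s, TComp (cupT_aux (nth false s) 0 n) (capT_aux (nth false s) 0 n)).

Definition jw_seq n : lc := map (jw_term n) (apt_seqs n).

Lemma tl_eq_jw_seq n : jw k n =~ jw_seq n.
Proof.
apply/perm_tl_eq/(perm_trans _ (perm_map (jw_term n) (perm_apt_seqs n))).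
rewrite -map_comp /jw; under eq_map => J do rewrite card_seq_of_set cup_I_seq cap_I_seq.
exact: perm_refl.
Qed.

Lemma lc_ty_jw_seq n : lc_ty (jw_seq n) n n.
Proof.
rewrite /lc_ty all_map; apply/allP => s _ /=.
by have [r [-> ->]] := ty_capT_cupT_aux (nth false s) n 0; rewrite /= eqxx.
Qed.

Lemma jw_seq0 : jw_seq 0 =~ [:: (1, TId 0)].
Proof. by rewrite /jw_seq /jw_term /= expr0; apply: (teq_comp1l 0 (TId 0)); solve_typed. Qed.

Lemma jw_seq1 : jw_seq 1 =~ [:: (1, TId 1)].
Proof. by rewrite /jw_seq /jw_term /= expr0; apply: (teq_comp1l 1 (TId 1)); solve_typed. Qed.

Lemma jw_seqSS n : jw_seq n.+2 =~ TId 1 ⊗ jw_seq n.+1 ++ scale_lc (-1) (cupcap ⊗ jw_seq n).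
Proof.
rewrite /jw_seq apt_seqsSS map_cat /scale_lc /tens_lc !allpairs1l -!map_comp.
apply: tl_cat; apply: eq_map_tl => s _; rewrite /jw_term /= ?exprS ?mul1r; split=> //.
  rewrite capT_auxSS cupT_auxSS /= (capT_aux_shift _ (nth false s) _ 1 0) //.
  rewrite (cupT_aux_shift _ (nth false s) _ 1 0) //.
  have [r [tycap tycup]] := ty_capT_cupT_aux (nth false s) n.+1 0.
  rewrite (teq_interchange (TId 1) _ (TId 1) _); try solve_typed.
  by rewrite (teq_comp1l 1 (TId 1)); [reflexivity | solve_typed].
rewrite capT_auxSS cupT_auxSS /= (capT_aux_shift _ (nth false s) _ 2 0) //.
rewrite (cupT_aux_shift _ (nth false s) _ 2 0) //.
have [r [tycap tycup]] := ty_capT_cupT_aux (nth false s) n 0.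
by rewrite (teq_interchange TCup _ TCap _); [reflexivity | solve_typed | solve_typed].
Qed.

End Presentation.

Theorem mainTheorem5 (k : fieldType) (n : nat) :
  tl_eq (comp_lc (jw k n) (jw k n)) (jw k n).
Proof.
rewrite tl_eq_jw_seq.
exact: idem_of_recursion (lc_ty_jw_seq k) (jw_seq0 k) (jw_seq1 k) (jw_seqSS k) n.
Qed.
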